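(* Let $X_0, X_1, \dots$ be positive, independent, identically distributed random variables with $E X_i = \mu_X > 0$, and let $L_1, L_2, \dots$ be positive, independent, identically distributed random variables with $E L_i = \mu_L < \infty$. Let $l_0 > 0$ be a constant. Consider the following stochastic ''ant on a rubber rope'' process. Initially the rope has length $R_0 = l_0$ and the ant is at the left endpoint, at position $p_0 = 0$. For each second $i = 1, 2, \dots$: first the ant moves forward along the rope by $X_{i-1}$ units, reaching position $p_{i-1} + X_{i-1}$; if $p_{i-1} + X_{i-1} \geq R_{i-1}$, the ant has reached the right endpoint of the rope at second $i$. Otherwise, at the end of second $i$ the rope stretches uniformly and instantly by $L_i$ units to length $R_i = R_{i-1} + L_i$, and the ant (carried along by the uniform stretching) is at position $p_i = (p_{i-1} + X_{i-1}) \cdot \frac{R_i}{R_{i-1}}$. Then, almost surely, the ant reaches the right endpoint of the rope at some finite second.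
   Context: Uniform stretching of the rope means that every point of the rope is scaled by the same factor, so the ratio of the ant's position to the rope's length is unchanged by a stretch. *)

From HB Require Import structures.
From mathcomp Require Import all_boot all_order all_algebra.
From mathcomp Require Import all_classical all_reals all_analysis.
Set Implicit Arguments. Unset Strict Implicit. Unset Printing Implicit Defensive.
Import Order.TTheory GRing.Theory Num.Theory.
Local Open Scope classical_set_scope.
Local Open Scope ring_scope.

Definition mutually_independent d (T : measurableType d) (R : realType)
  (P : probability T R) (X : nat -> T -> R) : Prop :=
  forall (J : seq nat) (B : nat -> set R), uniq J ->
    (forall i, i \in J -> measurable (B i)) ->
    P (\bigcap_(i in [set` J]) (X i @^-1` B i)) =
    (\prod_(i <- J) P (X i @^-1` B i))%E.

Definition identically_distributed d (T : measurableType d) (R : realType)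
  (P : probability T R) (X : nat -> T -> R) : Prop :=
  forall n (B : set R), measurable B -> P (X n @^-1` B) = P (X 0%N @^-1` B).

(* Deterministic ant-on-a-rubber-rope dynamics.
   x n = X_n (step of the ant during second n+1),
   l n = L_{n+1} (stretch at the end of second n+1).
   rope l0 l n = R_n,  pos l0 x l n = p_n. *)
Fixpoint rope (R : realType) (l0 : R) (l : nat -> R) (n : nat) : R :=
  match n with
  | 0%N => l0
  | n'.+1 => rope l0 l n' + l n'
  end.

Fixpoint pos (R : realType) (l0 : R) (x l : nat -> R) (n : nat) : R :=
  match n with
  | 0%N => 0
  | n'.+1 => (pos l0 x l n' + x n') * (rope l0 l n'.+1 / rope l0 l n')
  end.

(* The ant reaches the right endpoint at second n+1 iff p_n + X_n >= R_n;
   it reaches the endpoint at some finite second iff such an n exists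
   (the first such n is the actual reaching time; before it, the process
   follows exactly the recursion above). *)
Definition reaches_end (R : realType) (l0 : R) (x l : nat -> R) : Prop :=
  exists n : nat, rope l0 l n <= pos l0 x l n + x n.

From HB Require Import structures.
From mathcomp Require Import all_boot all_order all_algebra.
From mathcomp Require Import all_classical all_reals all_analysis.
From mathcomp Require Import ring lra measurable_realfun.
Import Order.TTheory GRing.Theory Num.Theory.
Local Open Scope classical_set_scope.
Local Open Scope ring_scope.

(* Since stretching preserves the ratio of the ant's position to the rope length,
   p_n = R_n * sum_(k<n) X_k / R_k, and the ant never arrives iff these partial
   sums stay below 1.  Fix a > 0 with q = P(X > a) > 0, let b_k be the
   indicator of {X_k > a} and h_k = 1/(k+1).  For b in [0,1] and t real,
   b / r >= 2 t h b - t^2 h^2 r, so sum_(k<N) X_k / R_k >= a (2 t U - t^2 V) with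
   U = sum h_k b_k and V = sum h_k^2 R_k.  With S = sum_(k<N) h_k, pairwise
   independence gives E (U - q S)^2 <= q S and E R_k = l_0 + k mu_L gives
   E V <= (l_0 + mu_L) S, so by Chebyshev and Markov U >= q S / 2 and V <= K S
   outside an event of probability 4 / (q S) + (l_0 + mu_L) / K.  On the
   complement, t = q / (2 K) makes a (2 t U - t^2 V) >= a q^2 S / (4 K) >= 1 as
   soon as S is large, which the divergence of the harmonic series allows.
   Hence the ant fails to arrive with probability at most e for every e > 0. *)

Lemma quad_le_div (R : realFieldType) (t h b r : R) : 0 <= b <= 1 -> 0 < r ->
  2 * t * (h * b) - t ^+ 2 * (h ^+ 2 * r) <= b / r.
Proof.
move=> /andP[b0 b1] r0; rewrite -subr_ge0.
have -> : b / r - (2 * t * (h * b) - t ^+ 2 * (h ^+ 2 * r)) =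
    b * (1 - t * h * r) ^+ 2 / r + (1 - b) * (t * h) ^+ 2 * r.
  by field; exact: lt0r_neq0.
apply: addr_ge0.
  by apply: divr_ge0 (ltW r0); exact: mulr_ge0 b0 (sqr_ge0 _).
by apply: mulr_ge0 (ltW r0); apply: mulr_ge0 (sqr_ge0 _); rewrite subr_ge0.
Qed.

Section rope_dynamics.
Context {R : realType} {l0 : R} {x l : nat -> R}.
Hypotheses (l0_gt0 : 0 < l0) (l_gt0 : forall n, 0 < l n).

Lemma rope_gt0 n : 0 < rope l0 l n.
Proof. by elim: n => [|n IH] //=; exact: addr_gt0. Qed.

Lemma pos_rope_sum n :
  pos l0 x l n = rope l0 l n * \sum_(k < n) x k / rope l0 l k.
Proof.
elim: n => [|n IH]; first by rewrite big_ord0 mulr0.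
rewrite big_ord_recr /= IH -/(rope l0 l n.+1).
by field; exact: lt0r_neq0 (rope_gt0 n).
Qed.

Lemma not_reaches_sum_lt1 N : ~ reaches_end l0 x l ->
  \sum_(k < N) x k / rope l0 l k < 1.
Proof.
move=> nr; case: N => [|n]; first by rewrite big_ord0.
have not_reached : pos l0 x l n + x n < rope l0 l n.
  by rewrite ltNge; apply/negP => reach; apply: nr; exists n.
rewrite pos_rope_sum in not_reached.
rewrite big_ord_recr /= -(ltr_pM2l (rope_gt0 n)) mulr1 mulrDr.
by rewrite [_ * (x n / _)]mulrC divfK ?lt0r_neq0 ?rope_gt0.
Qed.

Lemma not_reaches_quad_bound (a t : R) (b h : nat -> R) N :
  ~ reaches_end l0 x l -> 0 < a -> (forall k, 0 <= b k <= 1) ->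
  (forall k, a * b k <= x k) ->
  a * (2 * t * \sum_(k < N) h k * b k -
       t ^+ 2 * \sum_(k < N) h k ^+ 2 * rope l0 l k) < 1.
Proof.
move=> nr a0 b01 abx; apply: le_lt_trans (not_reaches_sum_lt1 N nr).
rewrite !mulr_sumr -sumrB mulr_sumr; apply: ler_sum => k _.
apply: le_trans (_ : a * (b k / rope l0 l k) <= _); last first.
  by rewrite mulrA ler_pM2r ?invr_gt0 ?rope_gt0.
by rewrite ler_pM2l //; exact: quad_le_div (rope_gt0 k).
Qed.

Lemma not_reaches_weighted_sums {a q K S : R} {b h : nat -> R} {N : nat} :
  ~ reaches_end l0 x l -> 0 < a -> 0 <= q -> 0 < K ->
  (forall k, 0 <= b k <= 1) -> (forall k, a * b k <= x k) ->
  4 * K <= a * q ^+ 2 * S ->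
  \sum_(k < N) h k * b k < q * S / 2 \/
  K * S < \sum_(k < N) h k ^+ 2 * rope l0 l k.
Proof.
move=> nr a0 q0 K0 b01 abx S_large.
set U := \sum_(k < N) _; set V := \sum_(k < N) _.
have [|U_ge] := ltP U (q * S / 2); [by left | right].
rewrite ltNge; apply/negP => V_le.
pose t := q / (2 * K).
have t0 : 0 <= t by rewrite divr_ge0 // mulr_ge0 // ltW.
have lower : q ^+ 2 * S / (4 * K) <= 2 * t * U - t ^+ 2 * V.
  have -> : q ^+ 2 * S / (4 * K) = 2 * t * (q * S / 2) - t ^+ 2 * (K * S).
    by rewrite /t; field; exact: lt0r_neq0.
  apply: lerB; first by rewrite ler_wpM2l // mulr_ge0.
  by rewrite ler_wpM2l // sqr_ge0.
have := @not_reaches_quad_bound a t b h N nr a0 b01 abx.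
apply/negP; rewrite -leNgt; apply: le_trans (ler_wpM2l (ltW a0) lower).
rewrite mulrA ler_pdivlMr ?mul1r; first by rewrite mulrA.
exact: mulr_gt0.
Qed.

End rope_dynamics.

Lemma harmonic_sum_unbounded {R : realType} (M : R) :
  exists N, M <= \sum_(k < N) harmonic k.
Proof.
apply/not_existsP => bounded; apply: (@dvg_harmonic R).
apply: nondecreasing_is_cvgn.
  apply/nondecreasing_seqP => n.
  by rewrite /series /= big_nat_recr //= lerDl harmonic_ge0.
exists M => _ [n _ <-]; rewrite /series /= big_mkord.
by apply/ltW; rewrite ltNge; apply/negP; exact: bounded.
Qed.

Lemma negligible_small_covers {d} {T : measurableType d} {R : realType}
    (mu : {measure set T -> \bar R}) (A : set T) :
  (forall e : R, 0 < e ->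
    exists B, [/\ measurable B, A `<=` B & (mu B <= e%:E)%E]) ->
  mu.-negligible A.
Proof.
move=> covers; have [B BP] := choice (fun n => covers _ (harmonic_gt0 n)).
have mB n : measurable (B n) by case: (BP n).
exists (\bigcap_n B n); split.
- exact: bigcapT_measurable.
- apply/eqP; rewrite eq_le measure_ge0 andbT; apply/lee_addgt0Pr => e e0.
  have [n] := ltr_add_invr e0; rewrite add0r add0e => /ltW small.
  have [_ _ muB] := BP n.
  apply: le_trans (le_trans _ muB) _; last by rewrite lee_fin.
  apply: le_measure; rewrite ?inE //; first exact: bigcapT_measurable.
  exact: bigcap_inf.
- by move=> w Aw n _; have [_ AB _] := BP n; exact: AB.
Qed.

Section integral_lemmas.
Context {d} {T : measurableType d} {R : realType}.
Variable mu : {measure set T -> \bar R}.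

Lemma mul_measure_le_integral (f : T -> R) (A : set T) (c : R) :
  measurable A -> measurable_fun setT f -> (forall w, 0 <= f w) ->
  0 <= c -> (forall w, A w -> c <= f w) ->
  (c%:E * mu A <= \int[mu]_w (f w)%:E)%E.
Proof.
move=> mA mf f0 c0 cf.
have mcA : measurable_fun setT (fun w => c * \1_A w).
  by apply: measurable_funM => //; exact: measurable_indic.
rewrite -(setIT A) -integral_indic // -ge0_integralZl_EFin //; last first.
  exact/measurable_EFinP/measurable_indic.
apply: ge0_le_integral => //.
- by move=> w _; rewrite lee_fin mulr_ge0 // indicE; case: (w \in A).
- by under eq_fun do rewrite -EFinM; exact/measurable_EFinP.
- exact/measurable_EFinP.
- move=> w _; rewrite -EFinM lee_fin indicE.
  by case: (boolP (w \in A)) => [/set_mem/cf|_]; rewrite ?mulr1 ?mulr0.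
Qed.

Lemma integral_indic_sum (I : Type) (s : seq I) (c : I -> R) (B : I -> set T) :
  (forall i, 0 <= c i) -> (forall i, measurable (B i)) ->
  (\int[mu]_w (\sum_(i <- s) c i * \1_(B i) w)%:E =
   \sum_(i <- s) (c i)%:E * mu (B i))%E.
Proof.
move=> c0 mB; under eq_integral do rewrite -sumEFin.
rewrite ge0_integral_sum //.
- apply: eq_bigr => i _; under eq_integral do rewrite EFinM.
  rewrite ge0_integralZl_EFin //= ?integral_indic ?setIT //.
  exact/measurable_EFinP/measurable_indic.
- by move=> i; apply/measurable_EFinP; apply: measurable_funM.
- by move=> i w _; rewrite lee_fin mulr_ge0 // indicE; case: (_ \in _).
Qed.

End integral_lemmas.

Lemma sum_pairs_diag (R : comPzRingType) (c : nat -> R) (q : R) N :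
  \sum_(j < N) \sum_(k < N) c j * c k * (if j == k then q else q * q) =
  q * q * (\sum_(k < N) c k) ^+ 2 + (q - q * q) * \sum_(k < N) c k ^+ 2.
Proof.
have row (j : 'I_N) : \sum_(k < N) c j * c k * (if j == k then q else q * q) =
    c j * (q * q) * \sum_(k < N) c k + (q - q * q) * c j ^+ 2.
  rewrite (bigD1 j) //= eqxx [in RHS](bigD1 j) //= mulrDr.
  rewrite (eq_bigr (fun k : 'I_N => c j * (q * q) * c k)); last first.
    by move=> k; rewrite eq_sym => /negPf ->; ring.
  by rewrite -mulr_sumr; ring.
rewrite (eq_bigr _ (fun j _ => row j)) big_split /= -!mulr_suml -mulr_sumr.
ring.
Qed.

Section pairwise_independent_events.
Context {d} {T : measurableType d} {R : realType} (P : probability T R).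
Variables (B : nat -> set T) (q : R) (c : nat -> R) (N : nat).
Hypotheses (mB : forall k, measurable (B k)) (PB : forall k, P (B k) = q%:E)
  (PBB : forall j k, j != k -> P (B j `&` B k) = (q * q)%:E)
  (c_ge0 : forall k, 0 <= c k).

Let U w := \sum_(k < N) c k * \1_(B k) w.
Let S := \sum_(k < N) c k.

Lemma measurable_indic_sum : measurable_fun setT U.
Proof. by apply: measurable_sum => k; apply: measurable_funM. Qed.

Lemma integral_indic_sum_eq : (\int[P]_w (U w)%:E = (q * S)%:E)%E.
Proof.
rewrite integral_indic_sum //.
under eq_bigr => i _ do rewrite [X in (_ * X)%E]PB.
by rewrite sumEFin mulr_sumr; congr _%:E; apply: eq_bigr => k _; rewrite mulrC.
Qed.

Lemma integral_sqr_indic_sum : (\int[P]_w (U w ^+ 2)%:E =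
  (q * q * S ^+ 2 + (q - q * q) * \sum_(k < N) c k ^+ 2)%:E)%E.
Proof.
have sqrU w : U w ^+ 2 =
    \sum_(jk : 'I_N * 'I_N) c jk.1 * c jk.2 * \1_(B jk.1 `&` B jk.2) w.
  rewrite expr2 mulr_suml.
  rewrite -(pair_bigA _ (fun j k : 'I_N => c j * c k * \1_(B j `&` B k) w)) /=.
  apply: eq_bigr => j _; rewrite mulr_sumr; apply: eq_bigr => k _.
  by rewrite indicI /=; ring.
under eq_integral do rewrite sqrU.
rewrite integral_indic_sum; last 2 first.
- by move=> jk; rewrite mulr_ge0.
- by move=> jk; exact: measurableI.
rewrite (eq_bigr (fun jk : 'I_N * 'I_N =>
  (c jk.1 * c jk.2 * (if jk.1 == jk.2 then q else q * q))%:E)); last first.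
  move=> [j k] _ /=; have [<-|jk] := eqVneq j k; first by rewrite setIid PB.
  by rewrite PBB.
rewrite sumEFin.
rewrite -(pair_bigA _ (fun j k : 'I_N =>
  c j * c k * if j == k then q else q * q)) /=.
by rewrite sum_pairs_diag.
Qed.

Lemma integral_sqr_centered_indic_sum : 0 <= q ->
  (\int[P]_w ((U w - q * S) ^+ 2)%:E =
   ((q - q * q) * \sum_(k < N) c k ^+ 2)%:E)%E.
Proof.
move=> q0.
(* Integrating the pointwise identity (U - qS)^2 + 2qS U = U^2 + (qS)^2, whose
   terms are all nonnegative, avoids any integrability side conditions. *)
have S0 : 0 <= S by exact: sumr_ge0.
have U0 w : 0 <= U w.
  by apply: sumr_ge0 => k _; rewrite mulr_ge0 // indicE; case: (_ \in _).
have mU := measurable_indic_sum.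
have expand : (\int[P]_w (((U w - q * S) ^+ 2)%:E + (2 * (q * S) * U w)%:E) =
               \int[P]_w ((U w ^+ 2)%:E + ((q * S) ^+ 2)%:E))%E.
  by apply: eq_integral => w _; rewrite -!EFinD; congr _%:E; ring.
rewrite !ge0_integralD // in expand; last 7 first.
- by move=> w _; rewrite lee_fin sqr_ge0.
- by apply/measurable_EFinP; apply: measurable_funX.
- by move=> w _; rewrite lee_fin sqr_ge0.
- by move=> w _; rewrite lee_fin sqr_ge0.
- by apply/measurable_EFinP; apply: measurable_funX; apply: measurable_funB.
- by move=> w _; rewrite lee_fin !mulr_ge0.
- by apply/measurable_EFinP; apply: measurable_funM.
have integral_scaled :
    (\int[P]_w (2 * (q * S) * U w)%:E = (2 * (q * S) * (q * S))%:E)%E.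
  under eq_integral do rewrite EFinM.
  rewrite ge0_integralZl_EFin ?mulr_ge0 ?integral_indic_sum_eq //.
  - by move=> w _; rewrite lee_fin.
  - exact/measurable_EFinP.
rewrite integral_scaled integral_sqr_indic_sum integral_cst //= in expand.
rewrite probability_setT mule1 in expand.
move: expand; case: (\int[P]_w _)%E => [r| |] //= [r_eq]; congr _%:E.
by apply: (@addIr _ (2 * (q * S) * (q * S))); rewrite r_eq; ring.
Qed.

Lemma indic_sum_lower_tail : 0 < q -> 0 < S -> (forall k, c k <= 1) ->
  (P (U @^-1` `]-oo, (q * S / 2)%R[) <= (4 / (q * S))%:E)%E.
Proof.
move=> q_gt0 S_gt0 c_le1.
set A := U @^-1` _.
have mA : measurable A.
  rewrite -[A]setTI.
  exact: measurable_indic_sum measurableT _ (measurable_itv _).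
have qS_gt0 : 0 < q * S by exact: mulr_gt0.
have far w : A w -> (q * S / 2) ^+ 2 <= (U w - q * S) ^+ 2.
  by rewrite /A /= in_itv /= => Uw; nra.
have mf : measurable_fun setT (fun w => (U w - q * S) ^+ 2).
  apply: measurable_funX; apply: measurable_funB => //.
  exact: measurable_indic_sum.
have := mul_measure_le_integral P _ _ _ mA mf (fun w => sqr_ge0 _) (sqr_ge0 _)
  far.
rewrite integral_sqr_centered_indic_sum ?(ltW q_gt0) // => markov.
have var_le : (q - q * q) * \sum_(k < N) c k ^+ 2 <= q * S.
  have : \sum_(k < N) c k ^+ 2 <= S.
    by apply: ler_sum => k _; rewrite expr2 ler_piMl.
  have : 0 <= \sum_(k < N) c k ^+ 2 by apply: sumr_ge0 => k _; exact: sqr_ge0.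
  nra.
have -> : 4 / (q * S) = ((q * S / 2) ^+ 2)^-1 * (q * S).
  by field; rewrite !lt0r_neq0.
rewrite EFinM lee_pdivlMl ?exprn_gt0 ?divr_gt0 //.
by apply: le_trans markov _; rewrite lee_fin.
Qed.

End pairwise_independent_events.

Section random_rope.
Context {d} {T : measurableType d} {R : realType} (P : probability T R).

Lemma integral_identically_distributed (Y : nat -> {RV P >-> R}) :
  (forall n w, 0 <= Y n w) -> identically_distributed P (fun n => Y n : T -> R) ->
  forall n, (\int[P]_w (Y n w)%:E = \int[P]_w (Y 0%N w)%:E)%E.
Proof.
move=> Y_ge0 Y_id n.
have distr k :
    (\int[P]_w (Y k w)%:E = \int[distribution P (Y k)]_y `|y|%:E)%E.
  rewrite ge0_integral_distribution //=.
    by apply: eq_integral => w _; rewrite /= ger0_norm.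
  by apply/measurable_EFinP; exact: normr_measurable.
rewrite !distr; apply: eq_measure_integral => A mA _ /=.
by rewrite /distribution /pushforward /= Y_id.
Qed.

Variables (L : nat -> {RV P >-> R}) (l0 mu : R).
Let rope_at k w := rope l0 (fun n => L n w) k.

Lemma measurable_rope k : measurable_fun setT (rope_at k).
Proof.
elim: k => [|k IH] /=; first exact: measurable_cst.
by apply: measurable_funD => //; exact: measurable_funPT.
Qed.

Lemma measurable_weighted_rope_sum (h : nat -> R) N :
  measurable_fun setT (fun w => \sum_(k < N) h k * rope_at k w).
Proof.
apply: measurable_sum => k; apply: measurable_funM => //.
exact: measurable_rope.
Qed.

Hypotheses (l0_gt0 : 0 < l0) (L_gt0 : forall n w, 0 < L n w)
  (L_id : identically_distributed P (fun n => L n : T -> R))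
  (EL : (\int[P]_w (L 0%N w)%:E = mu%:E)%E).

Lemma integral_rope k : (\int[P]_w (rope_at k w)%:E = (l0 + k%:R * mu)%:E)%E.
Proof.
rewrite /rope_at; elim: k => [|k IH] /=.
  by rewrite mul0r addr0 integral_cst //= probability_setT mule1.
under eq_integral do rewrite EFinD.
rewrite ge0_integralD //.
- rewrite IH integral_identically_distributed //; last by move=> n w; exact/ltW.
  by rewrite EL -EFinD mulrSr; congr _%:E; ring.
- by move=> w _; rewrite lee_fin ltW // rope_gt0.
- exact/measurable_EFinP/measurable_rope.
- by move=> w _; rewrite lee_fin ltW.
- exact/measurable_EFinP/measurable_funPT.
Qed.

Lemma integral_harmonic_rope_sum N : 0 <= mu ->
  (\int[P]_w (\sum_(k < N) harmonic k ^+ 2 * rope_at k w)%:E <=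
   ((l0 + mu) * \sum_(k < N) harmonic k)%:E)%E.
Proof.
move=> mu_ge0.
under eq_integral do rewrite -sumEFin.
rewrite ge0_integral_sum //; first last.
- by move=> k w _; rewrite lee_fin mulr_ge0 ?sqr_ge0 // ltW // rope_gt0.
- move=> k; apply/measurable_EFinP/measurable_funM => //.
  exact: measurable_rope.
rewrite (eq_bigr (fun k : 'I_N =>
  (harmonic k ^+ 2 * (l0 + k%:R * mu))%:E)); last first.
  move=> k _; under eq_integral do rewrite EFinM.
  rewrite ge0_integralZl_EFin ?sqr_ge0 ?integral_rope //.
  - by move=> w _; rewrite lee_fin ltW // rope_gt0.
  - exact/measurable_EFinP/measurable_rope.
rewrite sumEFin lee_fin mulr_sumr; apply: ler_sum => k _.
rewrite expr2 -mulrA mulrC ler_wpM2r ?harmonic_ge0 //=.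
rewrite mulrC ler_pdivrMr ?ltr0Sn //.
have := mulr_ge0 (ltW l0_gt0) (ler0n R k).
rewrite -natr1; lra.
Qed.

Lemma harmonic_rope_sum_upper_tail N (K : R) : 0 <= mu -> 0 < K ->
  0 < \sum_(k < N) harmonic k :> R ->
  (P ((fun w => \sum_(k < N) harmonic k ^+ 2 * rope_at k w)%R @^-1`
      `](K * \sum_(k < N) harmonic k)%R, +oo[) <= ((l0 + mu) / K)%:E)%E.
Proof.
move=> mu_ge0 K_gt0 S_gt0; set S := \sum_(k < N) _; set V := fun w => _.
have mV : measurable_fun setT V :=
  measurable_weighted_rope_sum (fun k => harmonic k ^+ 2) N.
have V_ge0 w : 0 <= V w.
  by apply: sumr_ge0 => k _; rewrite mulr_ge0 ?sqr_ge0 // ltW // rope_gt0.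
have mA : measurable (V @^-1` `]K * S, +oo[).
  by rewrite -[_ @^-1` _]setTI; exact: mV measurableT _ (measurable_itv _).
have large w : (V @^-1` `]K * S, +oo[) w -> K * S <= V w.
  by rewrite /= in_itv /= andbT => /ltW.
have := mul_measure_le_integral P _ _ _ mA mV V_ge0
  (ltW (mulr_gt0 K_gt0 S_gt0)) large.
move/le_trans/(_ (integral_harmonic_rope_sum N mu_ge0)).
have -> : (l0 + mu) / K = (K * S)^-1 * ((l0 + mu) * S).
  by field; rewrite !lt0r_neq0.
by move=> bound; rewrite EFinM lee_pdivlMl ?mulr_gt0.
Qed.

End random_rope.

Section threshold_events.
Context {d} {T : measurableType d} {R : realType} (P : probability T R).

Lemma exists_threshold_pos (Y : {RV P >-> R}) : (forall w, 0 < Y w) ->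
  exists2 a : R, 0 < a & (0 < P (Y @^-1` `]a, +oo[))%E.
Proof.
move=> Y_gt0.
have [[n Pn]|none] :=
  pselect (exists n, (0 < P (Y @^-1` `](n.+1%:R^-1)%R, +oo[))%E).
  by exists n.+1%:R^-1; rewrite ?invr_gt0.
have negl n : P.-negligible (Y @^-1` `]n.+1%:R^-1, +oo[).
  apply/negligibleP; first exact: measurable_funPTI (measurable_itv _).
  apply/eqP; rewrite eq_le measure_ge0 andbT leNgt; apply/negP => Pn.
  by apply: none; exists n.
have cover : \bigcup_n Y @^-1` `]n.+1%:R^-1, +oo[ = setT.
  apply/seteqP; split => // w _; have [n] := ltr_add_invr (Y_gt0 w).
  by rewrite add0r => lt; exists n => //=; rewrite in_itv /= andbT.
have := negligible_bigcup negl; rewrite cover.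
move/negligibleP => /(_ measurableT) /eqP.
by rewrite [X in X == _]probability_setT onee_eq0.
Qed.

Lemma mutually_independent_pair (Y : nat -> T -> R) (A : set R) j k :
  mutually_independent P Y -> measurable A -> j != k ->
  P (Y j @^-1` A `&` Y k @^-1` A) = (P (Y j @^-1` A) * P (Y k @^-1` A))%E.
Proof.
move=> Y_ind mA jk.
have := Y_ind [:: j; k] (fun=> A) _ (fun _ _ => mA).
rewrite /= inE jk !big_cons big_nil mule1 => /(_ isT) <-; congr (P _).
apply/seteqP; split => w /=.
- by move=> [Yj Yk] i; rewrite /= !inE => /orP[]/eqP->.
- by move=> Yjk; split; apply: Yjk; rewrite /= !inE eqxx ?orbT.
Qed.

End threshold_events.

Section ant_on_random_rope.
Context {d} {T : measurableType d} {R : realType} {P : probability T R}.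
Context {X L : nat -> {RV P >-> R}} {l0 mu a q : R}.
Hypotheses (X_gt0 : forall n w, 0 < X n w) (L_gt0 : forall n w, 0 < L n w)
  (l0_gt0 : 0 < l0) (L_id : identically_distributed P (fun n => L n : T -> R))
  (mu_ge0 : 0 <= mu) (EL : (\int[P]_w (L 0%N w)%:E = mu%:E)%E)
  (a_gt0 : 0 < a) (q_gt0 : 0 < q)
  (PB : forall k, P (X k @^-1` `]a, +oo[) = q%:E)
  (PBB : forall j k, j != k ->
    P (X j @^-1` `]a, +oo[ `&` X k @^-1` `]a, +oo[) = (q * q)%:E).

Lemma not_reaches_tails N K w : 0 < K ->
  4 * K <= a * q ^+ 2 * \sum_(k < N) harmonic k ->
  ~ reaches_end l0 (fun n => X n w) (fun n => L n w) ->
  \sum_(k < N) harmonic k * \1_(X k @^-1` `]a, +oo[) w <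
    q * (\sum_(k < N) harmonic k) / 2 \/
  K * \sum_(k < N) harmonic k <
    \sum_(k < N) harmonic k ^+ 2 * rope l0 (fun n => L n w) k.
Proof.
move=> K_gt0 S_large not_reached.
apply: (not_reaches_weighted_sums (b := fun k => \1_(X k @^-1` `]a, +oo[) w)
  l0_gt0 (L_gt0^~ w) not_reached a_gt0 (ltW q_gt0) K_gt0 _ _ S_large).
- by move=> k; rewrite indicE; case: (_ \in _); rewrite ?lexx ?ler01.
- move=> k; rewrite indicE; case: (boolP (w \in _)) => [|_]; last first.
    by rewrite mulr0 ltW.
  by rewrite inE /= in_itv /= andbT mulr1 => /ltW.
Qed.

Lemma not_reaches_small_cover e : 0 < e -> exists A, [/\ measurable A,
    [set w | ~ reaches_end l0 (fun n => X n w) (fun n => L n w)] `<=` A &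
    (P A <= e%:E)%E].
Proof.
(* K makes the Markov bound on V equal to e / 2; S >= 8 / (q e) makes the
   Chebyshev bound on U at most e / 2; S >= 4 K / (a q^2) is what
   not_reaches_tails needs. *)
move=> e_gt0; pose K := 2 * (l0 + mu) / e.
have K_gt0 : 0 < K by rewrite divr_gt0 // mulr_gt0 // ltr_wpDr.
have [N S_large] := harmonic_sum_unbounded (8 / (q * e) + 4 * K / (a * q ^+ 2)).
pose S := \sum_(k < N) harmonic k : R.
have pos1 : 0 < 8 / (q * e) by rewrite divr_gt0 ?mulr_gt0.
have pos2 : 0 < 4 * K / (a * q ^+ 2).
  by apply: divr_gt0; apply: mulr_gt0 => //; exact: exprn_gt0.
have S_ge1 : 8 / (q * e) <= S.
  by apply: le_trans S_large; rewrite lerDl; exact: ltW.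
have S_ge2 : 4 * K / (a * q ^+ 2) <= S.
  by apply: le_trans S_large; rewrite lerDr; exact: ltW.
have S_gt0 : 0 < S := lt_le_trans pos1 S_ge1.
pose B k := X k @^-1` `]a, +oo[.
have mB k : measurable (B k) by exact: measurable_funPTI (measurable_itv _).
have harmonic_le1 k : harmonic k <= 1 :> R.
  by rewrite /harmonic /= invf_le1 ?ler1n ?ltr0Sn.
set lowU := (fun w => \sum_(k < N) harmonic k * \1_(B k) w) @^-1`
  `]-oo, q * S / 2[.
set highV := (fun w => \sum_(k < N) harmonic k ^+ 2 * rope l0 (fun n => L n w) k)
  @^-1` `]K * S, +oo[.
have mlowU : measurable lowU.
  rewrite -[lowU]setTI.
  exact: (measurable_indic_sum B harmonic N mB) measurableT _ (measurable_itv _).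
have mhighV : measurable highV.
  rewrite -[highV]setTI.
  exact: (measurable_weighted_rope_sum P L l0 (fun k => harmonic k ^+ 2) N)
    measurableT _ (measurable_itv _).
exists (lowU `|` highV); split; first exact: measurableU.
  move=> w /= not_reached; rewrite /lowU /highV /= !in_itv /= andbT.
  apply: not_reaches_tails not_reached => //.
  by rewrite -ler_pdivrMl ?mulr_gt0 ?exprn_gt0 // mulrC.
apply: le_trans (measureU2 _ mlowU mhighV) _.
rewrite [e]splitr EFinD; apply: leeD.
- apply: le_trans (indic_sum_lower_tail P B q harmonic N mB PB PBB
    harmonic_ge0 q_gt0 S_gt0 harmonic_le1) _.
  rewrite lee_fin ler_pdivrMr ?mulr_gt0 //.
  rewrite ler_pdivrMr ?mulr_gt0 // in S_ge1.
  rewrite -/S; nra.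
- apply: le_trans (harmonic_rope_sum_upper_tail P L l0 mu l0_gt0 L_gt0 L_id EL
    N K mu_ge0 K_gt0 S_gt0) _.
  rewrite lee_fin /K le_eqVlt; apply/orP; left; apply/eqP.
  by field; rewrite !lt0r_neq0 // ltr_wpDr.
Qed.

End ant_on_random_rope.

Theorem theorem1 (d : measure_display) (T : measurableType d) (R : realType)
  (P : probability T R)
  (X : nat -> {RV P >-> R}) (L : nat -> {RV P >-> R}) (l0 : R) :
  (forall n w, 0 < X n w) ->
  mutually_independent P (fun n => X n : T -> R) ->
  identically_distributed P (fun n => X n : T -> R) ->
  (0 < 'E_P[X 0%N])%E ->
  (forall n w, 0 < L n w) ->
  mutually_independent P (fun n => L n : T -> R) ->
  identically_distributed P (fun n => L n : T -> R) ->
  ('E_P[L 0%N] < +oo)%E ->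
  0 < l0 ->
  {ae P, forall w, reaches_end l0 (fun n => X n w) (fun n => L n w)}.
Proof.
(* E X_0 > 0 already follows from X_0 > 0, and only the mean of the L_n is
   used. *)
move=> X_gt0 X_ind X_id _ L_gt0 _ L_id EL_fin l0_gt0.
have [a a_gt0 Pa_gt0] := exists_threshold_pos P (X 0%N) (X_gt0 0%N).
pose q := fine (P (X 0%N @^-1` `]a, +oo[)).
have PB k : P (X k @^-1` `]a, +oo[) = q%:E.
  rewrite X_id ?measurable_itv //; apply/esym/fineK/fin_num_measure.
  exact: measurable_funPTI (measurable_itv _).
have q_gt0 : 0 < q by rewrite -lte_fin -(PB 0%N).
have PBB j k : j != k ->
    P (X j @^-1` `]a, +oo[ `&` X k @^-1` `]a, +oo[) = (q * q)%:E.
  move=> jk; rewrite EFinM -{1}(PB j) -(PB k).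
  exact: (mutually_independent_pair P _ _ j k X_ind (measurable_itv _) jk).
have EL_ge0 : (0 <= 'E_P[L 0%N])%E by apply: expectation_ge0 => w; exact: ltW.
have EL : (\int[P]_w (L 0%N w)%:E = (fine 'E_P[L 0%N])%:E)%E.
  by rewrite -expectation_def fineK // ge0_fin_numE.
apply: negligible_small_covers => e e_gt0.
exact: (not_reaches_small_cover X_gt0 L_gt0 l0_gt0 L_id (fine_ge0 EL_ge0) EL
  a_gt0 q_gt0 PB PBB).
Qed.
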